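(* Let $a_1,\dots,a_n\in S^d$. Algorithm 2.9 (described in the context) solves the spherical feasibility problem. That is, it terminates either in step 2 with a point $x^k/\|x^k\|$ satisfying $a_i^Tx^k\ge0$ for all $i$, or in step 3 with a positively spanning subset of $\{a_1,\dots,a_n\}$. Moreover, whenever $Q_{k+1}$ is produced from $Q_k$, $$\mathrm{def}\,Q_{k+1}\le\sqrt{\frac{1-v^2}{1+(\mathrm{def}\,Q_k)^2+2\,\mathrm{def}\,Q_k\,v}}\;\mathrm{def}\,Q_k,\qquad v=v(x^k/\|x^k\|).$$
   Context: $S^d$ is the unit sphere in $\mathbb{R}^{d+1}$ and $O$ is the origin. For $x\in S^d$, the violation is $v(x)=\max\{0,\max_i(-a_i^Tx)\}$. An index $m$ is a most violated constraint for $x$ if $a_m^Tx=\min_j a_j^Tx$. A finite set $Q$ is positively spanning if it is affinely independent and $O\in\mathrm{conv}\,Q$. It is nearly positively spanning if it is affinely independent and the orthogonal projection $O'$ of $O$ onto $\mathrm{aff}\,Q$ lies in $\mathrm{conv}\,Q$; then $\mathrm{def}\,Q=\|O'\|$. The touching sphere of an affinely independent $Q$ is the unique sphere $\{z:\|z-C\|=R\}$ with $C\in\mathrm{aff}\,Q$ containing $Q$. Algorithm 2.9: (1) Choose any $j$ and set $k=1$, $x^1=a_j$, $Q_1=\{a_j\}$. (2) If $x^k/\|x^k\|$ is feasible, stop. Otherwise let $m$ be the index of a most violated constraint for $x^k/\|x^k\|$, and let $y$ be the point on the line through $x^k$ and $a_m$ closest to the origin. (3) If $Q_k\cup\{a_m\}$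 is positively spanning, stop. (4) Compute the center $C$ of the touching sphere of $Q_k\cup\{a_m\}$. (5) If $C\in\mathrm{conv}(Q_k\cup\{a_m\})$, set $x^{k+1}=C$, $Q_{k+1}=Q_k\cup\{a_m\}$ and $k:=k+1$, then go to (2). (6) Otherwise, let $y$ be the point where the segment $\overline{yC}$ meets the relative boundary of $\mathrm{conv}(Q_k\cup\{a_m\})$. Let $F$ be a facet containing $y$, and let $a_j$ be the vertex of $Q_k$ not in $F$. Set $Q_k:=Q_k\setminus\{a_j\}$ and go to (4). *)

From HB Require Import structures.
From mathcomp Require Import all_boot all_order all_algebra.
From mathcomp Require Import reals.
Set Implicit Arguments. Unset Strict Implicit. Unset Printing Implicit Defensive.
Import Order.TTheory GRing.Theory Num.Theory.
Local Open Scope ring_scope.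

Section Sphere.
Variables (R : realType) (d n : nat).
Notation vec := 'rV[R]_(d.+1).
Variable a : 'I_n -> vec.

Definition dot (u v : vec) : R := \sum_(i < d.+1) u 0 i * v 0 i.
Definition norm (u : vec) : R := Num.sqrt (dot u u).
Definition normalize (u : vec) : vec := (norm u)^-1 *: u.

Definition feasible (z : vec) : Prop := forall i, 0 <= dot (a i) z.
Definition violation (z : vec) : R := \big[Num.max/0]_(i < n) (- dot (a i) z).
Definition most_violated (z : vec) (m : 'I_n) : Prop :=
  forall j, dot (a m) z <= dot (a j) z.

(* subsets Q of {a_1,...,a_n} are represented by index sets S *)
Definition coeffs_on (S : {set 'I_n}) (lam : 'I_n -> R) : Prop :=
  forall i, i \notin S -> lam i = 0.
Definition comb (lam : 'I_n -> R) : vec := \sum_(i < n) lam i *: a i.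
Definition in_aff (S : {set 'I_n}) (p : vec) : Prop :=
  exists lam, coeffs_on S lam /\ \sum_(i < n) lam i = 1 /\ p = comb lam.
Definition in_conv (S : {set 'I_n}) (p : vec) : Prop :=
  exists lam, coeffs_on S lam /\ (forall i, 0 <= lam i) /\
              \sum_(i < n) lam i = 1 /\ p = comb lam.
Definition aff_indep (S : {set 'I_n}) : Prop :=
  forall lam, coeffs_on S lam -> \sum_(i < n) lam i = 0 -> comb lam = 0 ->
    forall i, lam i = 0.
Definition pos_spanning (S : {set 'I_n}) : Prop :=
  aff_indep S /\ in_conv S 0.
Definition proj_aff (S : {set 'I_n}) (o : vec) : Prop :=
  in_aff S o /\ forall i j, i \in S -> j \in S -> dot o (a i - a j) = 0.
Definition near_pos_spanning (S : {set 'I_n}) : Prop :=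
  aff_indep S /\ exists o, proj_aff S o /\ in_conv S o.
Definition touching_center (S : {set 'I_n}) (C : vec) : Prop :=
  in_aff S C /\ exists r, forall i, i \in S -> norm (a i - C) = r.
Definition line_closest (x p y : vec) : Prop :=
  (exists t, y = x + t *: (p - x)) /\ dot y (p - x) = 0.
Definition exit_point (S : {set 'I_n}) (y C y' : vec) : Prop :=
  exists t, 0 <= t <= 1 /\ y' = y + t *: (C - y) /\ in_conv S y' /\
    forall s, t < s <= 1 -> ~ in_conv S (y + s *: (C - y)).

Inductive state : Type :=
| Main of nat & vec & {set 'I_n}
    (* at step (2): k, x^k, Q_k *)
| Inner of nat & vec & {set 'I_n} & {set 'I_n} & 'I_n & vec
    (* at step (4): k, x^k, Q_k as at step (2), current (reduced) Q_k, m, y *)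
| StopFeasible of vec       (* stopped in step (2) with x^k/||x^k|| *)
| StopSpan of {set 'I_n}    (* stopped in step (3) with Q_k u {a_m} *)
| Error.                    (* an instruction of the algorithm is undefined *)

Definition final (s : state) : Prop :=
  match s with StopFeasible _ | StopSpan _ => True | _ => False end.

Inductive step : state -> state -> Prop :=
| st_zero k Q : step (Main k 0 Q) Error
| st_feas k x Q : x != 0 -> feasible (normalize x) ->
    step (Main k x Q) (StopFeasible (normalize x))
| st_degline k x Q m : x != 0 -> ~ feasible (normalize x) ->
    most_violated (normalize x) m -> x = a m -> step (Main k x Q) Error
| st_span k x Q m y : x != 0 -> ~ feasible (normalize x) ->
    most_violated (normalize x) m -> x <> a m -> line_closest x (a m) y ->
    pos_spanning (Q :|: [set m]) ->
    step (Main k x Q) (StopSpan (Q :|: [set m]))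
| st_enter k x Q m y : x != 0 -> ~ feasible (normalize x) ->
    most_violated (normalize x) m -> x <> a m -> line_closest x (a m) y ->
    ~ pos_spanning (Q :|: [set m]) ->
    step (Main k x Q) (Inner k x Q Q m y)
| st_dep k x Q0 Q m y : ~ aff_indep (Q :|: [set m]) ->
    step (Inner k x Q0 Q m y) Error
| st_accept k x Q0 Q m y C : aff_indep (Q :|: [set m]) ->
    touching_center (Q :|: [set m]) C -> in_conv (Q :|: [set m]) C ->
    step (Inner k x Q0 Q m y) (Main k.+1 C (Q :|: [set m]))
| st_badfacet k x Q0 Q m y C y' : aff_indep (Q :|: [set m]) ->
    touching_center (Q :|: [set m]) C -> ~ in_conv (Q :|: [set m]) C ->
    exit_point (Q :|: [set m]) y C y' ->
    in_conv ((Q :|: [set m]) :\ m) y' ->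
    step (Inner k x Q0 Q m y) Error
| st_reduce k x Q0 Q m y C y' j : aff_indep (Q :|: [set m]) ->
    touching_center (Q :|: [set m]) C -> ~ in_conv (Q :|: [set m]) C ->
    exit_point (Q :|: [set m]) y C y' ->
    j \in Q -> j != m ->
    in_conv ((Q :|: [set m]) :\ j) y' ->
    step (Inner k x Q0 Q m y) (Inner k x Q0 (Q :\ j) m y').

Inductive reachable : state -> Prop :=
| reach_init j : reachable (Main 1 (a j) [set j])
| reach_step s s' : reachable s -> step s s' -> reachable s'.

End Sphere.

Arguments Error {R d n}.
Arguments StopFeasible {R d n}.
Arguments StopSpan {R d n}.
Arguments Main {R d n}.
Arguments Inner {R d n}.

From HB Require Import structures.
From mathcomp Require Import all_boot all_order all_algebra.
From mathcomp Require Import reals boolp ring lra zify.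
Import Order.TTheory GRing.Theory Num.Theory.
Local Open Scope ring_scope.
Set Implicit Arguments. Unset Strict Implicit. Unset Printing Implicit Defensive.

(* The loop invariant is that x^k is the point of aff Q_k nearest to the origin
   (for unit vectors a_i this is the center of the touching sphere), that it lies
   in conv Q_k, and that Q_k is affinely independent.  The most violated a_m lies
   off the hyperplane {z | z.x^k = |x^k|^2} containing Q_k, so Q_k + a_m stays
   independent, and the foot y of the origin on the line through x^k and a_m lies
   in conv (Q_k + a_m), with positive weight on a_m and
   |y|^2 = (1 - v^2) / (1 + |x^k|^2 + 2 |x^k| v) |x^k|^2.
   As in Wolfe's nearest point algorithm, the nearest point C of the enlarged
   affine hull has positive weight on a_m; walking from y towards C and dropping
   a vertex by the ratio test therefore never drops a_m and never increases the
   norm, and when C lands in the convex hull it is x^(k+1), with |x^(k+1)| <= |y|.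
   Termination: |x^k| decreases strictly, so fewer and fewer affine hulls have a
   nearest point shorter than x^k, and each inner step removes a vertex. *)

Section Euclid.
Variables (R : realType) (d : nat).
Notation vec := 'rV[R]_(d.+1).
Implicit Types (u v w x : vec).

Lemma dotC u v : dot u v = dot v u.
Proof. by apply: eq_bigr => i _; rewrite mulrC. Qed.

Lemma dotDl u v w : dot (u + v) w = dot u w + dot v w.
Proof. by rewrite /dot -big_split; apply: eq_bigr => i _; rewrite !mxE mulrDl. Qed.

Lemma dotZl c u w : dot (c *: u) w = c * dot u w.
Proof. by rewrite /dot mulr_sumr; apply: eq_bigr => i _; rewrite !mxE mulrA. Qed.

Lemma dotNl u w : dot (- u) w = - dot u w.
Proof. by rewrite -scaleN1r dotZl mulN1r. Qed.

Lemma dotBl u v w : dot (u - v) w = dot u w - dot v w.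
Proof. by rewrite dotDl dotNl. Qed.

Lemma dotDr u v w : dot w (u + v) = dot w u + dot w v.
Proof. by rewrite dotC dotDl !(dotC w). Qed.

Lemma dotZr c u w : dot w (c *: u) = c * dot w u.
Proof. by rewrite dotC dotZl dotC. Qed.

Lemma dotNr u w : dot w (- u) = - dot w u.
Proof. by rewrite dotC dotNl dotC. Qed.

Lemma dotBr u v w : dot w (u - v) = dot w u - dot w v.
Proof. by rewrite dotDr dotNr. Qed.

Lemma dot0l w : dot 0 w = 0.
Proof. by rewrite -(scale0r 0) dotZl mul0r. Qed.

Lemma dot0r w : dot w 0 = 0.
Proof. by rewrite dotC dot0l. Qed.

Lemma dot_suml I (r : seq I) (P : pred I) (F : I -> vec) w :
  dot (\sum_(k <- r | P k) F k) w = \sum_(k <- r | P k) dot (F k) w.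
Proof. by elim/big_rec2: _ => [|k y1 y2 _ <-]; rewrite ?dot0l ?dotDl. Qed.

Lemma dotvv_ge0 u : 0 <= dot u u.
Proof. by apply: sumr_ge0 => i _; rewrite -expr2 sqr_ge0. Qed.

Lemma dotvv_eq0 u : (dot u u == 0) = (u == 0).
Proof.
apply/eqP/eqP => [uu0|->]; last exact: dot0l.
apply/rowP => i; rewrite mxE; apply/eqP; rewrite -sqrf_eq0 expr2.
by move/eqP: uu0; rewrite psumr_eq0 => [/allP/(_ i (mem_index_enum _))|j _];
  rewrite -?expr2 ?sqr_ge0.
Qed.

Lemma dotvv_gt0 u : (0 < dot u u) = (u != 0).
Proof. by rewrite lt_def dotvv_ge0 dotvv_eq0 andbT. Qed.

Lemma sqr_norm u : norm u ^+ 2 = dot u u.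
Proof. by rewrite sqr_sqrtr // dotvv_ge0. Qed.

Lemma norm_gt0 u : u != 0 -> 0 < norm u.
Proof. by rewrite -dotvv_gt0 /norm sqrtr_gt0. Qed.

Lemma dot_normalize w x : dot w (normalize x) = dot w x / norm x.
Proof. by rewrite dotZr mulrC. Qed.

Lemma norm_normalize x : x != 0 -> norm (normalize x) = 1.
Proof.
move=> /norm_gt0 nx_gt0; rewrite /norm /normalize dotZl dotZr -sqr_norm.
by rewrite mulrA -expr2 -exprMn mulVf ?gt_eqF // expr1n sqrtr1.
Qed.

Lemma lerpE u w t : u + t *: (w - u) = (1 - t) *: u + t *: w.
Proof. by rewrite scalerBr scalerBl scale1r addrA addrAC. Qed.

Lemma line_closest_param x p y t : y = x + t *: (p - x) -> dot y (p - x) = 0 ->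
  t * dot (p - x) (p - x) = dot x (x - p) /\ dot y y = dot x x - t * dot x (x - p).
Proof.
move=> -> yp0; have xp : dot x (x - p) = - dot x (p - x) by rewrite -dotNr opprB.
split; first by rewrite xp; move: yp0; rewrite dotDl dotZl; lra.
set z := x + t *: (p - x) in yp0 *.
have -> : dot z z = dot z x by rewrite {1}/z dotDr dotZr yp0 mulr0 addr0.
by rewrite dotDl dotZl (dotC (p - x)) xp; ring.
Qed.

Lemma norm_le_sqrt_mul u w c : w != 0 -> dot u u <= c * norm w ^+ 2 ->
  norm u <= Num.sqrt c * norm w.
Proof.
move=> /norm_gt0 w_gt0 uc; have c_ge0 : 0 <= c.
  have : 0 < norm w ^+ 2 by rewrite exprn_gt0.
  have := dotvv_ge0 u; nra.
have -> : norm w = Num.sqrt (norm w ^+ 2) by rewrite sqrtr_sqr ger0_norm // ltW.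
by rewrite -sqrtrM // ler_sqrt // mulr_ge0 // exprn_ge0 // ltW.
Qed.
End Euclid.

Section AffineHull.
Variables (R : realType) (d n : nat) (a : 'I_n -> 'rV[R]_(d.+1)).
Notation vec := 'rV[R]_(d.+1).
Implicit Types (S Q P : {set 'I_n}) (o p q u v w x y C : vec) (lam mu : 'I_n -> R).

Definition orth_aff v S := forall i j, i \in S -> j \in S -> dot v (a i - a j) = 0.

Definition mix (al be : R) lam mu i := al * lam i + be * mu i.

Definition coef1 (k : 'I_n) i : R := (i == k)%:R.

Lemma sum_mix al be lam mu :
  \sum_i mix al be lam mu i = al * \sum_i lam i + be * \sum_i mu i.
Proof. by rewrite big_split /= !mulr_sumr. Qed.

Lemma comb_mix al be lam mu :
  comb a (mix al be lam mu) = al *: comb a lam + be *: comb a mu.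
Proof.
rewrite /comb !scaler_sumr -big_split; apply: eq_bigr => i _.
by rewrite scalerDl !scalerA.
Qed.

Lemma coeffs_on_mix S al be lam mu : coeffs_on S lam -> coeffs_on S mu ->
  coeffs_on S (mix al be lam mu).
Proof. by move=> hlam hmu i iS; rewrite /mix hlam // hmu // !mulr0 addr0. Qed.

Lemma sum_coef1 k : \sum_i coef1 k i = 1.
Proof. by rewrite (bigD1 k) //= big1 ?addr0 /coef1 ?eqxx // => i /negbTE ->. Qed.

Lemma comb_coef1 k : comb a (coef1 k) = a k.
Proof.
rewrite /comb (bigD1 k) //= big1 ?addr0 /coef1 ?eqxx ?scale1r //.
by move=> i /negbTE ->; rewrite scale0r.
Qed.

Lemma coeffs_on_coef1 S k : k \in S -> coeffs_on S (coef1 k).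
Proof. by move=> kS i; apply: contraNeq; rewrite pnatr_eq0 eqb0 negbK => /eqP ->. Qed.

Lemma dot_comb lam w : dot (comb a lam) w = \sum_i lam i * dot (a i) w.
Proof. by rewrite dot_suml; apply: eq_bigr => i _; rewrite dotZl. Qed.

Lemma coeffs_onS S S' lam : S \subset S' -> coeffs_on S lam -> coeffs_on S' lam.
Proof. by move=> /subsetP sub hlam i iS; apply: hlam; apply: contra iS; apply: sub. Qed.

Lemma in_affS S S' p : S \subset S' -> in_aff a S p -> in_aff a S' p.
Proof. by move=> sub [lam [hlam H]]; exists lam; split=> //; exact: coeffs_onS hlam. Qed.

Lemma in_convS S S' p : S \subset S' -> in_conv a S p -> in_conv a S' p.
Proof. by move=> sub [lam [hlam H]]; exists lam; split=> //; exact: coeffs_onS hlam. Qed.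

Lemma aff_indepS S S' : S' \subset S -> aff_indep a S -> aff_indep a S'.
Proof. by move=> sub hS lam hlam; apply: hS; exact: coeffs_onS hlam. Qed.

Lemma aff_indep_set1 j : aff_indep a [set j].
Proof.
move=> lam hlam sum0 _ i; have lam_out k : k != j -> lam k = 0.
  by move=> kj; apply: hlam; rewrite in_set1.
have [->|/lam_out//] := eqVneq i j.
by move: sum0; rewrite (bigD1 j) //= big1 ?addr0 // => k /lam_out.
Qed.

Lemma in_aff_a S k : k \in S -> in_aff a S (a k).
Proof.
by move=> kS; exists (coef1 k); rewrite sum_coef1 comb_coef1; split=> //; exact: coeffs_on_coef1.
Qed.

Lemma in_conv_a S k : k \in S -> in_conv a S (a k).
Proof.
move=> kS; exists (coef1 k); rewrite sum_coef1 comb_coef1.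
split; first exact: coeffs_on_coef1.
by split=> // i; rewrite ler0n.
Qed.

Lemma in_aff_nonempty S p : in_aff a S p -> exists k, k \in S.
Proof.
case=> lam [hlam [sum1 _]]; have [S0|[k kS]] := set_0Vmem S; last by exists k.
move: sum1; rewrite big1 => [/eqP|i _]; first by rewrite eq_sym oner_eq0.
by apply: hlam; rewrite S0 in_set0.
Qed.

Lemma in_aff_translate S p q r s : in_aff a S p -> in_aff a S q -> in_aff a S r ->
  in_aff a S (p + s *: (q - r)).
Proof.
move=> [lp [hp [sp ->]]] [lq [hq [sq ->]]] [lr [hr [sr ->]]].
exists (mix 1 s lp (mix 1 (-1) lq lr)); split; first by do !apply: coeffs_on_mix.
rewrite !sum_mix !comb_mix sp sq sr !scale1r scaleN1r; split=> //; ring.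
Qed.

Lemma aff_indep_coef_uniq S lam mu : aff_indep a S -> coeffs_on S lam -> coeffs_on S mu ->
  \sum_i lam i = \sum_i mu i -> comb a lam = comb a mu -> lam =1 mu.
Proof.
move=> hS hlam hmu hsum hcomb i; apply/eqP; rewrite -subr_eq0 -mulN1r -[lam i]mul1r.
apply/eqP; apply: hS (coeffs_on_mix 1 (-1) hlam hmu) _ _ i.
  by rewrite sum_mix hsum; ring.
by rewrite comb_mix hcomb scaleN1r scale1r subrr.
Qed.

Lemma aff_indep_lerp_coef S lam mu nu s : aff_indep a S ->
  coeffs_on S lam -> coeffs_on S mu -> coeffs_on S nu ->
  \sum_i lam i = 1 -> \sum_i mu i = 1 -> \sum_i nu i = 1 ->
  comb a nu = comb a lam + s *: (comb a mu - comb a lam) -> nu =1 mix (1 - s) s lam mu.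
Proof.
move=> hS hlam hmu hnu lam1 mu1 nu1 enu; apply: aff_indep_coef_uniq hS hnu _ _ _.
- exact: coeffs_on_mix.
- by rewrite sum_mix lam1 mu1 nu1; ring.
- by rewrite comb_mix enu lerpE.
Qed.

Lemma orth_aff_const v S c : (forall i, i \in S -> dot v (a i) = c) -> orth_aff v S.
Proof. by move=> H i j iS jS; rewrite dotBr !H // subrr. Qed.

Lemma orth_aff_dot v S p i : orth_aff v S -> in_aff a S p -> i \in S ->
  dot v p = dot v (a i).
Proof.
move=> hv [lam [hlam [sum1 ->]]] iS; rewrite dotC dot_comb.
transitivity (\sum_j lam j * dot v (a i)); last by rewrite -mulr_suml sum1 mul1r.
apply: eq_bigr => j _; have [jS|jS] := boolP (j \in S); last by rewrite hlam ?mul0r.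
by congr (_ * _); apply/eqP; rewrite dotC -subr_eq0 -dotBr hv.
Qed.

Lemma orth_affN v S : orth_aff v S -> orth_aff (- v) S.
Proof. by move=> hv i j iS jS; rewrite dotNl hv // oppr0. Qed.

Lemma orth_affB v w s S : orth_aff v S -> orth_aff w S -> orth_aff (v - s *: w) S.
Proof. by move=> hv hw i j iS jS; rewrite dotBl dotZl hv // hw // mulr0 subr0. Qed.

Lemma orth_aff_setU1 v S k q : orth_aff v S -> in_aff a S q -> dot v (a k - q) = 0 ->
  orth_aff v (k |: S).
Proof.
move=> hv hq vk; have [i iS] := in_aff_nonempty hq.
apply: (@orth_aff_const _ _ (dot v q)) => j; rewrite in_setU1 => /predU1P [->|jS].
  by apply/eqP; rewrite -subr_eq0 -dotBr vk.
by rewrite (orth_aff_dot hv hq jS).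
Qed.

(* As in Gram-Schmidt: correct the projection onto aff (S :\ k) along the
   component of a k orthogonal to that hull. *)
Lemma orth_proj_exists z S : S != set0 ->
  exists2 p, in_aff a S p & orth_aff (z - p) S.
Proof.
move Hc: #|S| => N; elim: N S Hc z => [|N IH] S cardS z; first by rewrite -cards_eq0 cardS.
case/set0Pn=> k kS; have SE : S = k |: (S :\ k) by rewrite setD1K.
have cardSk : #|S :\ k| = N by move: cardS; rewrite (cardsD1 k S) kS add1n => -[].
have [Sk0|[k' k'S]] := set_0Vmem (S :\ k).
  exists (a k); first exact: in_aff_a.
  by move=> i j; rewrite SE Sk0 setU0 !in_set1 => /eqP -> /eqP ->; rewrite subrr dot0r.
have Sk_neq0 : S :\ k != set0 by apply/set0Pn; exists k'.
have [p hp op] := IH _ cardSk z Sk_neq0; have [q hq oq] := IH _ cardSk (a k) Sk_neq0.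
set w := a k - q; have sub : S :\ k \subset S by exact: subD1set.
have [w0|w_neq0] := eqVneq w 0.
  exists p; first exact: in_affS hp.
  by rewrite SE; apply: orth_aff_setU1 hq _ => //; rewrite -/w w0 dot0r.
set s := dot (z - p) w / dot w w.
exists (p + s *: w).
  by apply: in_aff_translate; [exact: in_affS hp | exact: in_aff_a | exact: in_affS hq].
rewrite opprD addrA SE; apply: orth_aff_setU1 hq _; first exact: orth_affB.
by rewrite dotBl dotZl /s divfK ?subrr // dotvv_eq0.
Qed.

Lemma proj_aff_exists S : S != set0 -> exists o, proj_aff a S o.
Proof.
by move=> /(orth_proj_exists 0) [o ho /orth_affN]; rewrite sub0r opprK; exists o.
Qed.

Lemma proj_aff_dot S o p : proj_aff a S o -> in_aff a S p -> dot o p = dot o o.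
Proof.
move=> [ho oo] hp; have [k kS] := in_aff_nonempty hp.
by rewrite (orth_aff_dot oo hp kS) (orth_aff_dot oo ho kS).
Qed.

Lemma proj_aff_pythagoras S o p : proj_aff a S o -> in_aff a S p ->
  dot p p = dot o o + dot (p - o) (p - o).
Proof. by move=> ho hp; rewrite !dotBl !dotBr (dotC p o) (proj_aff_dot ho hp); ring. Qed.

Lemma proj_aff_min S o p : proj_aff a S o -> in_aff a S p -> dot o o <= dot p p.
Proof. by move=> ho hp; rewrite (proj_aff_pythagoras ho hp) lerDl dotvv_ge0. Qed.

Lemma proj_aff_uniq S o1 o2 : proj_aff a S o1 -> proj_aff a S o2 -> o1 = o2.
Proof.
move=> h1 h2; apply/eqP; rewrite -subr_eq0 -dotvv_eq0; apply/eqP.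
have := proj_aff_pythagoras h1 (proj1 h2); have := proj_aff_pythagoras h2 (proj1 h1).
rewrite -opprB dotNl dotNr opprK; lra.
Qed.

Lemma proj_aff_lerp_dot S C y s : proj_aff a S C -> in_aff a S y ->
  dot (y + s *: (C - y)) (y + s *: (C - y)) = dot C C + (1 - s) ^+ 2 * (dot y y - dot C C).
Proof.
move=> hC hy.
have hys : in_aff a S (y + s *: (C - y)) by apply: in_aff_translate => //; case: hC.
rewrite (proj_aff_pythagoras hC hys).
have -> : y + s *: (C - y) - C = (1 - s) *: (y - C).
  by apply/rowP => i; rewrite !mxE; ring.
rewrite dotZl dotZr (proj_aff_pythagoras hC hy); ring.
Qed.

Lemma proj_aff_lerp_le S C y s : proj_aff a S C -> in_aff a S y -> 0 <= s <= 1 ->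
  dot (y + s *: (C - y)) (y + s *: (C - y)) <= dot y y.
Proof.
move=> hC hy /andP [s0 s1]; rewrite (proj_aff_lerp_dot _ hC hy).
have Cy := proj_aff_min hC hy.
have : (1 - s) ^+ 2 * (dot y y - dot C C) <= dot y y - dot C C.
  by rewrite ler_piMl ?subr_ge0 // expr_le1 ?subr_ge0 // lerBlDr lerDl.
lra.
Qed.

Lemma exit_point_dot_le S y C y' : proj_aff a S C -> in_aff a S y ->
  exit_point a S y C y' -> dot y' y' <= dot y y.
Proof. by move=> hC hy [t [t01 [-> _]]]; apply: proj_aff_lerp_le hC hy t01. Qed.

Lemma aff_indep_setU1 S m w c : aff_indep a S ->
  (forall i, i \in S -> dot (a i) w = c) -> dot (a m) w != c ->
  aff_indep a (S :|: [set m]).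
Proof.
move=> hS Sw mw lam hlam sum0 comb0.
have split_m i : lam i * dot (a i) w = lam i * c + coef1 m i * (lam m * (dot (a m) w - c)).
  rewrite /coef1; have [->|im] := eqVneq i m; first by rewrite mul1r; ring.
  rewrite mul0r addr0.
  have [iS|iS] := boolP (i \in S); first by rewrite Sw.
  by rewrite hlam ?mul0r // in_setU in_set1 negb_or iS im.
have : dot (comb a lam) w = 0 by rewrite comb0 dot0l.
rewrite dot_comb (eq_bigr _ (fun i _ => split_m i)) big_split /= -!mulr_suml sum0.
rewrite sum_coef1 mul0r mul1r add0r => /eqP; rewrite mulf_eq0 subr_eq0 (negbTE mw) orbF.
move=> /eqP lam_m0; apply: hS sum0 comb0 => i iS.
by have [->//|im] := eqVneq i m; apply: hlam; rewrite in_setU in_set1 negb_or iS im.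
Qed.

Definition in_conv_pos_at S m y := exists lam,
  [/\ coeffs_on S lam, forall i, 0 <= lam i, \sum_i lam i = 1, y = comb a lam & 0 < lam m].

Lemma in_conv_pos_at_lerp S m x t : in_conv a S x -> 0 < t <= 1 ->
  in_conv_pos_at (S :|: [set m]) m (x + t *: (a m - x)).
Proof.
move=> [lam [hlam [lam_ge0 [sum1 ->]]]] /andP [t_gt0 t_le1].
exists (mix (1 - t) t lam (coef1 m)); split.
- apply: coeffs_on_mix; first by apply: coeffs_onS hlam; exact: subsetUl.
  by apply: coeffs_on_coef1; rewrite in_setU in_set1 eqxx orbT.
- move=> i; rewrite /mix; apply: addr_ge0; apply: mulr_ge0 => //.
  + by rewrite subr_ge0.
  + exact: ltW.
- by rewrite sum_mix sum1 sum_coef1; ring.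
- by rewrite comb_mix comb_coef1 lerpE.
- rewrite /mix /coef1 eqxx mulr1; have := lam_ge0 m.
  have : 0 <= 1 - t by rewrite subr_ge0.
  nra.
Qed.

(* The ratio test of the simplex method: the largest step from lam towards mu
   that keeps all coefficients nonnegative. *)
Lemma ratio_test lam mu : (forall i, 0 <= lam i) -> (exists i, mu i < 0) ->
  exists t j, [/\ 0 <= t < 1, forall i, 0 <= mix (1 - t) t lam mu i,
    mix (1 - t) t lam mu j = 0 & forall s, t < s -> mix (1 - s) s lam mu j < 0].
Proof.
move=> lam_ge0 [i0 mu_i0].
set r := fun i => lam i / (lam i - mu i).
have [j mu_j jmin] := @arg_minP _ _ _ i0 (fun i => mu i < 0) r mu_i0.
have gap_gt0 i : mu i < 0 -> 0 < lam i - mu i by have := lam_ge0 i; lra.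
have rj_gap : r j * (lam j - mu j) = lam j by rewrite divfK ?gt_eqF ?gap_gt0.
have rj_ge0 : 0 <= r j by rewrite divr_ge0 // ltW ?gap_gt0.
have rj_lt1 : r j < 1 by rewrite /r ltr_pdivrMr ?gap_gt0 // mul1r; lra.
exists (r j), j; split.
- by rewrite rj_ge0 rj_lt1.
- move=> i; rewrite /mix; have [mu_i|mu_i] := ltrP (mu i) 0.
    by have := jmin i mu_i; rewrite /r ler_pdivlMr ?gap_gt0 //; lra.
  by apply: addr_ge0; apply: mulr_ge0; rewrite // subr_ge0 ltW.
- by rewrite /mix; lra.
- move=> s ts; rewrite /mix.
  have : r j * (lam j - mu j) < s * (lam j - mu j) by rewrite ltr_pM2r ?gap_gt0.
  lra.
Qed.

Section Algorithm.
Hypothesis ha : forall i, norm (a i) = 1.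

Lemma dot_aa i : dot (a i) (a i) = 1.
Proof. by rewrite -sqr_norm ha expr1n. Qed.

Lemma touching_centerE S C : touching_center a S C <-> proj_aff a S C.
Proof.
have dist_a i : dot (a i - C) (a i - C) = 1 - 2 * dot C (a i) + dot C C.
  by rewrite !dotBl !dotBr dot_aa (dotC (a i)); ring.
split=> [[hC [r hr]]|[hC oC]]; split=> //; have [k kS] := in_aff_nonempty hC.
  apply: (@orth_aff_const _ _ (dot C (a k))) => i iS.
  have : norm (a i - C) ^+ 2 = norm (a k - C) ^+ 2 by rewrite !hr.
  by rewrite !sqr_norm !dist_a => ?; lra.
exists (norm (a k - C)) => i iS; rewrite /norm !dist_a.
by rewrite -(orth_aff_dot oC (in_aff_a iS) kS).
Qed.

Lemma violation_ge0 z : 0 <= violation a z.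
Proof. exact: bigmax_ge_id. Qed.

Lemma most_violatedP z m : ~ feasible a z -> most_violated a z m ->
  dot (a m) z < 0 /\ violation a z = - dot (a m) z.
Proof.
move=> /existsNP [i /negP]; rewrite -ltNge => ai_lt0 hm.
have am_lt0 : dot (a m) z < 0 by apply: le_lt_trans (hm i) ai_lt0.
split=> //; apply/eqP; rewrite eq_le le_bigmax andbT.
by apply: bigmax_le => [|j _]; rewrite ?lerN2 // oppr_ge0 ltW.
Qed.

Lemma most_violated_neq x m : ~ feasible a (normalize x) ->
  most_violated a (normalize x) m -> x != a m.
Proof.
move=> infeas hm; apply/eqP => xam; have [] := most_violatedP infeas hm.
by rewrite xam /normalize ha invr1 scale1r dot_aa ltr10.
Qed.

(* For the point y of step (2), |y|^2 = shrink_factor x * |x|^2 (see inner_inv_enter). *)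
Definition shrink_factor x :=
  let v := violation a (normalize x) in
  (1 - v ^+ 2) / (1 + norm x ^+ 2 + 2 * norm x * v).

Lemma shrink_dot_lt x u : x != 0 -> dot u u <= shrink_factor x * norm x ^+ 2 ->
  dot u u < dot x x.
Proof.
move=> x0 /le_lt_trans; apply; rewrite sqr_norm gtr_pMl ?dotvv_gt0 //.
have x_gt0 := norm_gt0 x0; have v_ge0 := violation_ge0 (normalize x).
have : 0 < norm x ^+ 2 by rewrite exprn_gt0.
have : 0 <= norm x * violation a (normalize x) by rewrite mulr_ge0 // ltW.
by rewrite /shrink_factor ltr_pdivrMr ?mul1r; nra.
Qed.

Record main_inv x Q : Prop := MainInv {
  main_indep : aff_indep a Q;
  main_proj : proj_aff a Q x;
  main_conv : in_conv a Q x;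
  main_neq0 : x != 0 }.

Record inner_inv x (Q0 Q : {set 'I_n}) m y : Prop := InnerInv {
  inner_main : main_inv x Q0;
  inner_not_spanning : ~ pos_spanning a (Q0 :|: [set m]);
  inner_sub : Q \subset Q0;
  inner_indep : aff_indep a (Q0 :|: [set m]);
  inner_conv : in_conv_pos_at (Q :|: [set m]) m y;
  inner_shrink : dot y y <= shrink_factor x * norm x ^+ 2 }.

Lemma main_inv_init j : main_inv (a j) [set j].
Proof.
split; [exact: aff_indep_set1 | split | exact/in_conv_a/set11 | ].
- exact/in_aff_a/set11.
- by move=> i k /set1P -> /set1P ->; rewrite subrr dot0r.
- by rewrite -dotvv_gt0 dot_aa ltr01.
Qed.

Lemma inner_lt x Q0 Q m y : inner_inv x Q0 Q m y -> dot y y < dot x x.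
Proof. by case=> [[_ _ _ x0] _ _ _ _ /shrink_dot_lt]; apply. Qed.

Lemma inner_inv_enter x Q0 m y : main_inv x Q0 -> ~ feasible a (normalize x) ->
  most_violated a (normalize x) m -> line_closest x (a m) y ->
  ~ pos_spanning a (Q0 :|: [set m]) -> inner_inv x Q0 Q0 m y.
Proof.
move=> hM infeas hm [[t ey] yp] not_span; have [hQ0 hx hconv x0] := hM.
have [am_lt0 vE] := most_violatedP infeas hm.
set v := violation a (normalize x) in vE *; set dl := norm x.
have dl_gt0 : 0 < dl := norm_gt0 x0.
have v_gt0 : 0 < v by rewrite vE oppr_gt0.
have amx : dot (a m) x = - (v * dl).
  by rewrite vE dot_normalize -/dl mulNr opprK divfK ?gt_eqF.
have xx : dot x x = dl ^+ 2 by rewrite sqr_norm.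
have Q0x i : i \in Q0 -> dot (a i) x = dl ^+ 2.
  by move=> iQ0; rewrite dotC (proj_aff_dot hx (in_aff_a iQ0)).
have D : dot (a m - x) (a m - x) = 1 + dl ^+ 2 + 2 * dl * v.
  by rewrite !dotBl !dotBr dot_aa (dotC x) amx xx; ring.
have xam : dot x (x - a m) = dl * (dl + v) by rewrite dotBr xx dotC amx; ring.
have D_gt0 : 0 < 1 + dl ^+ 2 + 2 * dl * v.
  have : 0 < dl * v by rewrite mulr_gt0.
  nra.
have [tD yy] := line_closest_param ey yp; rewrite D xam in tD yy.
have tE : t = dl * (dl + v) / (1 + dl ^+ 2 + 2 * dl * v).
  by rewrite -tD mulfK ?gt_eqF.
split=> //.
- apply: aff_indep_setU1 hQ0 Q0x _; rewrite amx; apply/eqP.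
  have : 0 < dl ^+ 2 by rewrite exprn_gt0.
  have : 0 < v * dl by rewrite mulr_gt0.
  lra.
- rewrite ey; apply: in_conv_pos_at_lerp hconv _; apply/andP; split.
    by rewrite tE divr_gt0 // mulr_gt0 // addr_gt0.
  rewrite tE ler_pdivrMr // mul1r; have : 0 < dl * v by rewrite mulr_gt0.
  nra.
- rewrite yy xx tE /shrink_factor -/v -/dl le_eqVlt; apply/orP; left; apply/eqP.
  by field; rewrite gt_eqF.
Qed.

Lemma inner_indep_setU1 x Q0 Q m y : inner_inv x Q0 Q m y -> aff_indep a (Q :|: [set m]).
Proof. by case=> _ _ sub hi _ _; apply: aff_indepS hi; exact: setSU. Qed.

Lemma inner_in_aff x Q0 Q m y : inner_inv x Q0 Q m y -> in_aff a (Q :|: [set m]) y.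
Proof. by case=> _ _ _ _ [lam [hlam _ lam1 ey _]] _; exists lam. Qed.

(* Wolfe's argument: otherwise the segment from y to C crosses aff Q, inside
   aff Q0, at a point shorter than x. *)
Lemma inner_center_coef_gt0 x Q0 Q m y C mu : inner_inv x Q0 Q m y ->
  proj_aff a (Q :|: [set m]) C -> coeffs_on (Q :|: [set m]) mu ->
  \sum_i mu i = 1 -> C = comb a mu -> 0 < mu m.
Proof.
move=> hI hC hmu mu1 eC; rewrite ltNge; apply/negP => mu_m_le0.
have [lam [hlam lam_ge0 lam1 ey lam_m]] := inner_conv hI.
have gap : 0 < lam m - mu m by lra.
set s := lam m / (lam m - mu m).
have s01 : 0 <= s <= 1.
  by rewrite /s divr_ge0 ?(ltW lam_m) ?(ltW gap) //= ler_pdivrMr // mul1r; lra.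
have coef_m0 : mix (1 - s) s lam mu m = 0.
  by rewrite /mix /s; field; rewrite gt_eqF.
have far : dot x x <= dot (y + s *: (C - y)) (y + s *: (C - y)).
  apply: proj_aff_min (main_proj (inner_main hI)) _.
  exists (mix (1 - s) s lam mu); split.
    move=> i iQ0; have [->//|im] := eqVneq i m.
    apply: (coeffs_on_mix _ _ hlam hmu); rewrite in_setU in_set1 negb_or im andbT.
    by apply: contra iQ0; apply: (subsetP (inner_sub hI)).
  by rewrite sum_mix comb_mix lam1 mu1 -ey -eC lerpE; split=> //; ring.
have := proj_aff_lerp_le hC (inner_in_aff hI) s01; have := inner_lt hI; lra.
Qed.

Lemma inner_center x Q0 Q m y C : inner_inv x Q0 Q m y ->
  touching_center a (Q :|: [set m]) C -> exists mu,
  [/\ coeffs_on (Q :|: [set m]) mu, \sum_i mu i = 1, C = comb a mu & 0 < mu m].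
Proof.
move=> hI /touching_centerE hC; have [mu [hmu [mu1 eC]]] := proj1 hC.
by exists mu; split=> //; exact: inner_center_coef_gt0 hI hC hmu mu1 eC.
Qed.

Lemma inner_lerp_coef_gt0 x Q0 Q m y C t nu : inner_inv x Q0 Q m y ->
  touching_center a (Q :|: [set m]) C -> 0 <= t <= 1 ->
  coeffs_on (Q :|: [set m]) nu -> \sum_i nu i = 1 -> comb a nu = y + t *: (C - y) ->
  0 < nu m.
Proof.
move=> hI htc /andP [t_ge0 t_le1] hnu nu1 enu.
have [mu [hmu mu1 eC mu_m]] := inner_center hI htc.
have [lam [hlam lam_ge0 lam1 ey lam_m]] := inner_conv hI.
rewrite (aff_indep_lerp_coef (s := t) (inner_indep_setU1 hI) hlam hmu hnu lam1 mu1 nu1);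
  last by rewrite enu -ey -eC.
rewrite /mix; have [t_lt1|t_eq1] := ltrP t 1.
  have : 0 < (1 - t) * lam m by rewrite mulr_gt0 // subr_gt0.
  have : 0 <= t * mu m by rewrite mulr_ge0 // ltW.
  lra.
by rewrite (@le_anti _ _ t 1) ?t_le1 // subrr mul0r add0r mul1r.
Qed.

Lemma inner_exit_not_facet x Q0 Q m y C y' : inner_inv x Q0 Q m y ->
  touching_center a (Q :|: [set m]) C -> exit_point a (Q :|: [set m]) y C y' ->
  ~ in_conv a ((Q :|: [set m]) :\ m) y'.
Proof.
move=> hI htc [t [t01 [ey' _]]] [nu [hnu [_ [nu1 enu]]]].
have := inner_lerp_coef_gt0 hI htc t01 (coeffs_onS (subD1set _ _) hnu) nu1.
by rewrite -enu -ey' hnu ?setD11 // ltxx => /(_ erefl).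
Qed.

Lemma inner_inv_reduce x Q0 Q m y C y' j : inner_inv x Q0 Q m y ->
  touching_center a (Q :|: [set m]) C -> exit_point a (Q :|: [set m]) y C y' ->
  j \in Q -> j != m -> in_conv a ((Q :|: [set m]) :\ j) y' ->
  inner_inv x Q0 (Q :\ j) m y'.
Proof.
move=> hI htc hexit jQ jm [nu [hnu [nu_ge0 [nu1 enu]]]].
have sub : (Q :|: [set m]) :\ j \subset (Q :\ j) :|: [set m].
  by rewrite setDUl setUS // subD1set.
have [t [t01 [ey' _]]] := hexit.
have nu_m : 0 < nu m.
  apply: inner_lerp_coef_gt0 hI htc t01 _ nu1 _; last by rewrite -enu.
  by apply: coeffs_onS hnu; exact: subD1set.
have y'y : dot y' y' <= dot y y.
  by apply: exit_point_dot_le hexit; [exact/touching_centerE | exact: inner_in_aff hI].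
case: hI => hM not_span Qsub hi _ yy; split=> //.
- by apply: subset_trans Qsub; exact: subD1set.
- by exists nu; split=> //; exact: coeffs_onS hnu.
- exact: le_trans yy.
Qed.

Lemma inner_accept x Q0 Q m y C : inner_inv x Q0 Q m y ->
  touching_center a (Q :|: [set m]) C -> in_conv a (Q :|: [set m]) C ->
  main_inv C (Q :|: [set m]) /\ dot C C <= shrink_factor x * norm x ^+ 2.
Proof.
move=> hI /touching_centerE hC hconv; split.
  split=> //; first exact: inner_indep_setU1 hI.
  apply/eqP => C0; apply: (inner_not_spanning hI); split; first exact: inner_indep hI.
  by rewrite -C0; apply: in_convS hconv; rewrite setSU // (inner_sub hI).
exact: le_trans (proj_aff_min hC (inner_in_aff hI)) (inner_shrink hI).
Qed.

Lemma inner_exit_exists x Q0 Q m y C : inner_inv x Q0 Q m y ->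
  touching_center a (Q :|: [set m]) C -> ~ in_conv a (Q :|: [set m]) C ->
  exists y' j, [/\ exit_point a (Q :|: [set m]) y C y', j \in Q, j != m &
    in_conv a ((Q :|: [set m]) :\ j) y'].
Proof.
move=> hI htc C_out.
have [mu [hmu mu1 eC mu_m]] := inner_center hI htc.
have [lam [hlam lam_ge0 lam1 ey lam_m]] := inner_conv hI.
have [[i mu_i]|mu_ge0] := pselect (exists i, mu i < 0); last first.
  exfalso; apply: C_out; exists mu; split=> //; split=> // i.
  by rewrite leNgt; apply/negP => mu_i; apply: mu_ge0; exists i.
have [t [j [/andP [t_ge0 t_lt1] mix_ge0 mix_j0 mix_out]]] := ratio_test lam_ge0 (ex_intro _ i mu_i).
have mu_j : mu j < 0 by have := mix_out 1 t_lt1; rewrite /mix subrr mul0r add0r mul1r.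
have jS : j \in Q :|: [set m] by apply: contraLR mu_j => /hmu ->; rewrite ltxx.
have jm : j != m by apply: contraTneq mu_j => ->; rewrite -leNgt ltW.
have hmix : coeffs_on (Q :|: [set m]) (mix (1 - t) t lam mu) by exact: coeffs_on_mix.
have mix1 : \sum_i mix (1 - t) t lam mu i = 1 by rewrite sum_mix lam1 mu1; ring.
have emix : y + t *: (C - y) = comb a (mix (1 - t) t lam mu) by rewrite comb_mix -ey -eC lerpE.
exists (y + t *: (C - y)), j; split.
- exists t; split; first by rewrite t_ge0 ltW.
  split=> //; split; first by exists (mix (1 - t) t lam mu).
  move=> s /andP [ts s_le1] [nu [hnu [nu_ge0 [nu1 enu]]]].
  have enu' : comb a nu = comb a lam + s *: (comb a mu - comb a lam).
    by rewrite -enu ey eC.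
  have := nu_ge0 j; rewrite leNgt.
  by rewrite (aff_indep_lerp_coef (inner_indep_setU1 hI) hlam hmu hnu lam1 mu1 nu1 enu') mix_out.
- by move: jS; rewrite in_setU in_set1 (negbTE jm) orbF.
- exact: jm.
- exists (mix (1 - t) t lam mu); do !split=> //.
  by move=> k; rewrite in_setD1 negb_and negbK => /predU1P [->|/hmix].
Qed.

Definition state_inv (s : state R d n) : Prop :=
  match s with
  | Main _ x Q => main_inv x Q
  | Inner _ x Q0 Q m y => inner_inv x Q0 Q m y
  | StopFeasible z => norm z = 1 /\ feasible a z
  | StopSpan Q => pos_spanning a Q
  | Error => False
  end.

Lemma step_inv s s' : state_inv s -> step a s s' -> state_inv s'.
Proof.
move=> hs st; case: st hs => /=.
- by move=> k Q [_ _ _]; rewrite eqxx.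
- by move=> k x Q x0 feas _; split=> //; exact: norm_normalize.
- by move=> k x Q m _ infeas hm /eqP; rewrite (negbTE (most_violated_neq infeas hm)).
- by [].
- by move=> k x Q m y _ infeas hm _ hy not_span hM; exact: inner_inv_enter.
- by move=> k x Q0 Q m y dep /inner_indep_setU1.
- by move=> k x Q0 Q m y C _ htc hconv hI; case: (inner_accept hI htc hconv).
- move=> k x Q0 Q m y C y' _ htc _ hexit hconv hI.
  exact: inner_exit_not_facet hI htc hexit hconv.
- move=> k x Q0 Q m y C y' j _ htc _ hexit jQ jm hconv hI.
  exact: inner_inv_reduce hI htc hexit jQ jm hconv.
Qed.

Lemma reachable_inv s : reachable a s -> state_inv s.
Proof. by elim=> [j|s1 s2 _ IH st]; [exact: main_inv_init | exact: step_inv IH st]. Qed.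

Lemma main_progress k x Q : main_inv x Q -> exists s', step a (Main k x Q) s'.
Proof.
move=> [_ _ _ x0].
have [feas|infeas] := pselect (feasible a (normalize x)).
  by exists (StopFeasible (normalize x)); apply: st_feas.
have [i0 _] : exists i, ~ 0 <= dot (a i) (normalize x) by apply/existsNP.
have [m _ m_min] := @arg_minP _ _ _ i0 predT (fun i => dot (a i) (normalize x)) isT.
have hm : most_violated a (normalize x) m by move=> j; exact: m_min.
have xm := most_violated_neq infeas hm.
set w := a m - x; set t := - dot x w / dot w w.
have hy : line_closest x (a m) (x + t *: w).
  split; first by exists t.
  by rewrite dotDl dotZl /t divfK ?addrN // dotvv_eq0 /w subr_eq0 eq_sym.
have [span|not_span] := pselect (pos_spanning a (Q :|: [set m])).
  by exists (StopSpan (Q :|: [set m])); apply: st_span hy span => //; exact/eqP.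
by exists (Inner k x Q Q m (x + t *: w)); apply: st_enter => //; exact/eqP.
Qed.

Lemma inner_progress k x Q0 Q m y : inner_inv x Q0 Q m y ->
  exists s', step a (Inner k x Q0 Q m y) s'.
Proof.
move=> hI; have hi := inner_indep_setU1 hI.
have [C hC] : exists C, proj_aff a (Q :|: [set m]) C.
  by apply: proj_aff_exists; apply/set0Pn; exists m; rewrite in_setU set11 orbT.
move/touching_centerE: hC => htc.
have [hconv|C_out] := pselect (in_conv a (Q :|: [set m]) C).
  by exists (Main k.+1 C (Q :|: [set m])); apply: st_accept.
have [y' [j [hexit jQ jm hconv]]] := inner_exit_exists hI htc C_out.
by exists (Inner k x Q0 (Q :\ j) m y'); apply: st_reduce hexit jQ jm hconv.
Qed.

Lemma state_inv_progress s : state_inv s -> final s \/ exists s', step a s s'.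
Proof.
case: s => [k x Q|k x Q0 Q m y|z|Q|] //= hs; [right | right | left | left] => //.
- exact: main_progress.
- exact: inner_progress.
Qed.

Definition shorter_hulls x : {set {set 'I_n}} :=
  [set S | `[< exists o, proj_aff a S o /\ dot o o < dot x x >]].

Lemma shorter_hulls_proper x C P : proj_aff a P C -> dot C C < dot x x ->
  shorter_hulls C \proper shorter_hulls x.
Proof.
move=> hC Cx; apply/properP; split.
  apply/subsetP => S; rewrite !inE => /asboolP [o [ho oC]].
  by apply/asboolP; exists o; split=> //; exact: lt_trans Cx.
exists P; rewrite !inE; first by apply/asboolP; exists C.
by apply/negP => /asboolP [o [/(proj_aff_uniq hC) -> ]]; rewrite ltxx.
Qed.

Definition measure (s : state R d n) : nat :=
  match s with
  | Main _ x _ => (#|shorter_hulls x| * n.+2 + n.+1)%N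
  | Inner _ x _ Q _ _ => (#|shorter_hulls x| * n.+2 + #|Q|)%N
  | _ => 0
  end.

Lemma step_measure_lt s s' : state_inv s -> step a s s' -> (measure s' < measure s)%N.
Proof.
move=> hs st; case: st hs => /=; try by move=> *; rewrite addnS.
- by move=> k x Q *; rewrite ltn_add2l ltnS -[n in (_ <= n)%N]card_ord max_card.
- by move=> k x Q0 Q m y dep /inner_indep_setU1.
- move=> k x Q0 Q m y C _ htc hconv hI; have [[_ hC _ _] CC] := inner_accept hI htc hconv.
  have Cx := shrink_dot_lt (main_neq0 (inner_main hI)) CC.
  have lt_card := proper_card (shorter_hulls_proper hC Cx).
  apply: leq_trans (leq_addr _ _); apply: (@leq_trans (#|shorter_hulls C|.+1 * n.+2)).
    by rewrite mulSn addnC ltn_add2r.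
  by rewrite leq_mul2r lt_card orbT.
- move=> k x Q0 Q m y C y' _ htc _ hexit hconv hI.
  by case: (inner_exit_not_facet hI htc hexit hconv).
- by move=> k x Q0 Q m y C y' j _ _ _ _ jQ *; rewrite ltn_add2l (cardsD1 j Q) jQ.
Qed.

Lemma state_inv_acc s : state_inv s -> Acc (fun s1 s2 => step a s2 s1) s.
Proof.
have [N] := ubnP (measure s); elim: N s => [|N IH] s; first by rewrite ltn0.
move=> lt_sN hs; constructor=> s' st; apply: IH (step_inv hs st).
exact: leq_trans (step_measure_lt hs st) lt_sN.
Qed.

Lemma step_inner_main k x Q0 Q m y k' C P :
  step a (Inner k x Q0 Q m y) (Main k' C P) ->
  [/\ P = Q :|: [set m], touching_center a P C & in_conv a P C].
Proof. by move=> st; inversion st. Qed.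

Lemma main_inv_near_pos_spanning x Q : main_inv x Q -> near_pos_spanning a Q.
Proof. by case=> hi hx hconv _; split=> //; exists x. Qed.

End Algorithm.

End AffineHull.

Theorem lemma2p10 (R : realType) (d n : nat) (a : 'I_n -> 'rV[R]_(d.+1))
    (ha : forall i, norm (a i) = 1) :
  (* the algorithm never gets stuck or hits an undefined instruction *)
  (forall s, reachable a s -> s <> Error /\ (final s \/ exists s', step a s s')) /\
  (* every run terminates *)
  (forall s, reachable a s -> Acc (fun t u => step a u t) s) /\
  (* correct outputs *)
  (forall z, reachable a (StopFeasible z) -> norm z = 1 /\ feasible a z) /\
  (forall Q, reachable a (StopSpan Q) -> pos_spanning a Q) /\
  (* deficiency decrease whenever Q_{k+1} is produced from Q_k *)
  (forall k x Q0 Q m y C P,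
     reachable a (Inner k x Q0 Q m y) ->
     step a (Inner k x Q0 Q m y) (Main k.+1 C P) ->
     near_pos_spanning a Q0 /\ near_pos_spanning a P /\
     forall o0 o1, proj_aff a Q0 o0 -> proj_aff a P o1 ->
       let v := violation a (normalize x) in
       norm o1 <= Num.sqrt ((1 - v ^+ 2) / (1 + norm o0 ^+ 2 + 2 * norm o0 * v))
                  * norm o0).
Proof.
have inv := reachable_inv ha.
split; first by move=> s /inv hs; split; [by case: s hs | exact: state_inv_progress].
split; first by move=> s /inv; exact: state_inv_acc.
split; first by move=> z /inv.
split; first by move=> Q /inv.
move=> k x Q0 Q m y C P /inv hI st; have [-> htc hconv] := step_inner_main st.
have [hC CC] := inner_accept ha hI htc hconv; have hx := inner_main hI.
split; first exact: main_inv_near_pos_spanning hx.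
split; first exact: main_inv_near_pos_spanning hC.
move=> o0 o1 /(proj_aff_uniq (main_proj hx)) <- /(proj_aff_uniq (main_proj hC)) <-.
exact: norm_le_sqrt_mul (main_neq0 hx) CC.
Qed.
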